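(* Let $s,t,r\in\mathbb{N}$ with $s\leqslant rt$ and $r\leqslant st$. The Lie group $U(r)$ acts smoothly, freely and properly on the manifold $V_{s,t,r}$ by $U\cdot V=(U\otimes I)V$, where $U\in U(r)$, $V\in V_{s,t,r}$ and $I$ is the $t\times t$ identity matrix (in particular, $U\cdot V\in V_{s,t,r}$).
   Context: $V_{s,t,r}$ is the set of $V=[A_1;\dots;A_r]\in\mathbb{C}^{rt\times s}$ (vertical stacking of blocks $A_i\in\mathbb{C}^{t\times s}$) with $V^{\ast}V=I$ and $A_1,\dots,A_r$ linearly independent over $\mathbb{C}$; it is a smooth embedded (open) submanifold of the Stiefel manifold $\{V\in\mathbb{C}^{rt\times s}:V^{\ast}V=I\}$. An action is free if $g\cdot p=p$ implies $g$ is the identity, and proper if $(g,p)\mapsto(g\cdot p,p)$ is a proper map. *)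

(* Complex numbers are R[i] (mathcomp
   real_closed's [complex R]) for an arbitrary [R : realType]; topology and
   smoothness are transported to the underlying real coordinates
   (real part, imaginary part), which are finite-dimensional real normed
   spaces of real matrices. *)
From HB Require Import structures.
From mathcomp Require Import all_boot all_algebra.
From mathcomp Require Import all_classical all_reals all_analysis.
From mathcomp Require Import complex.
Set Implicit Arguments. Unset Strict Implicit. Unset Printing Implicit Defensive.
Import GRing.Theory Num.Theory numFieldNormedType.Exports.
Local Open Scope ring_scope.
Local Open Scope classical_set_scope.

Section Defs.
Variable R : realType.
Local Notation C := (R[i]).

Definition adj m n (A : 'M[C]_(m, n)) : 'M[C]_(n, m) :=
  (map_mx (fun z => Num.conj z) A)^T.

Definition unitary r (U : 'M[C]_r) : Prop := adj U *m U = 1%:M.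

(* index bookkeeping for the vertical stacking [A_1; ...; A_r] of t x s blocks:
   row (i, j) of block i has global row index i * t + j *)
Lemma blk_idx_lt r t (i : 'I_r) (j : 'I_t) : (i * t + j < r * t)%N.
Proof.
case: i j => i Hi [j Hj] /=.
apply: (@leq_trans (i.+1 * t)); first by rewrite mulSn addnC ltn_add2r.
by rewrite leq_mul2r Hi orbT.
Qed.
Definition blk_idx r t (i : 'I_r) (j : 'I_t) : 'I_(r * t) := Ordinal (blk_idx_lt i j).

Lemma blk_q_lt r t (a : 'I_(r * t)) : (a %/ t < r)%N.
Proof.
case: a => a Ha /=; case: t Ha => [|t] Ha; first by rewrite muln0 in Ha.
by rewrite ltn_divLR.
Qed.
Lemma blk_r_lt r t (a : 'I_(r * t)) : (a %% t < t)%N.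
Proof.
case: a => a Ha /=; case: t Ha => [|t] Ha; first by rewrite muln0 in Ha.
by rewrite ltn_mod.
Qed.
Definition blk_q r t (a : 'I_(r * t)) : 'I_r := Ordinal (blk_q_lt a).
Definition blk_r r t (a : 'I_(r * t)) : 'I_t := Ordinal (blk_r_lt a).

Definition block r t s (V : 'M[C]_(r * t, s)) (i : 'I_r) : 'M[C]_(t, s) :=
  \matrix_(j < t, k < s) V (blk_idx i j) k.

Definition blocks_lin_indep r t s (V : 'M[C]_(r * t, s)) : Prop :=
  forall c : 'I_r -> C, \sum_(i < r) c i *: block V i = 0 -> forall i, c i = 0.

Definition Vstr s t r (V : 'M[C]_(r * t, s)) : Prop :=
  adj V *m V = 1%:M /\ blocks_lin_indep V.

(* Kronecker product U (x) I_t, rows/columns indexed as (i, j) |-> i * t + j *)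
Definition kronI r t (U : 'M[C]_r) : 'M[C]_(r * t) :=
  \matrix_(a, b) (U (blk_q a) (blk_q b) * (blk_r a == blk_r b)%:R).

Definition act r t s (U : 'M[C]_r) (V : 'M[C]_(r * t, s)) : 'M[C]_(r * t, s) :=
  kronI t U *m V.

Definition rmx m n (A : 'M[C]_(m, n)) : 'M[R]_(m, n) * 'M[R]_(m, n) :=
  (map_mx (@complex.Re R) A, map_mx (@complex.Im R) A).

(* C^k / C^oo on a set W of a real normed space: Frechet differentiable at
   every point of W, and so are all iterated directional derivatives *)
Fixpoint smooth_on_k (E F : normedModType R) (k : nat) (W : set E) (G : E -> F)
  : Prop :=
  match k with
  | 0 => forall x, W x -> differentiable G x
  | k'.+1 => (forall x, W x -> differentiable G x) /\
             forall v : E, smooth_on_k k' W (fun x => derive G x v)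
  end.
Definition smooth_on (E F : normedModType R) (W : set E) (G : E -> F) : Prop :=
  forall k, smooth_on_k k W G.

End Defs.

From HB Require Import structures.
From mathcomp Require Import all_boot all_algebra.
From mathcomp Require Import all_classical all_reals all_analysis.
From mathcomp Require Import complex.
From mathcomp Require Import ring lra.
Import GRing.Theory Num.Theory numFieldNormedType.Exports.
Local Open Scope ring_scope.
Local Open Scope classical_set_scope.
Set Implicit Arguments. Unset Strict Implicit. Unset Printing Implicit Defensive.

(* U (x) I_t is unitary whenever U is, so U . V = (U (x) I_t) V still has
   orthonormal columns.  The i-th block of U . V is sum_k U_ik A_k, so U . V
   has linearly independent blocks because U is invertible, and U . V = V
   forces U = 1 because the A_k are independent.  In real coordinates the
   action is a polynomial map, hence smooth.  U(r) is closed (a level set of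
   the polynomial map U |-> U^* U) and bounded (|U_ij| <= 1), hence compact,
   so the preimage of a compact K under (U, V) |-> (U . V, V) is a closed
   subset of the compact set U(r) x pr_2(K). *)

Section Blocks.
Variables r t : nat.

Lemma blk_q_idx (i : 'I_r) (j : 'I_t) : blk_q (blk_idx i j) = i.
Proof.
apply: val_inj => /=; case: j => j Hj /=.
by rewrite divnMDl ?(leq_ltn_trans _ Hj) // divn_small // addn0.
Qed.

Lemma blk_r_idx (i : 'I_r) (j : 'I_t) : blk_r (blk_idx i j) = j.
Proof. by apply: val_inj => /=; case: j => j Hj /=; rewrite modnMDl modn_small. Qed.

Lemma blk_idxK (a : 'I_(r * t)) : blk_idx (blk_q a) (blk_r a) = a.
Proof. by apply: val_inj => /=; rewrite -divn_eq. Qed.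

Lemma eq_blk (a b : 'I_(r * t)) :
  (a == b) = (blk_q a == blk_q b) && (blk_r a == blk_r b).
Proof.
apply/eqP/andP => [->|[/eqP ha /eqP hb]] //.
by rewrite -(blk_idxK a) -(blk_idxK b) ha hb.
Qed.

Lemma big_blk (V : nmodType) (F : 'I_(r * t) -> V) :
  \sum_(a < r * t) F a = \sum_(i < r) \sum_(j < t) F (blk_idx i j).
Proof.
rewrite pair_big /= (reindex (fun p : 'I_r * 'I_t => blk_idx p.1 p.2)) //=.
apply: onW_bij; exists (fun a => (blk_q a, blk_r a)) => [[i j]|a] /=.
  by rewrite blk_q_idx blk_r_idx.
by rewrite blk_idxK.
Qed.

End Blocks.

Lemma adj_mul (R : realType) m n p (A : 'M[R[i]]_(m, n)) (B : 'M[R[i]]_(n, p)) :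
  adj (A *m B) = adj B *m adj A.
Proof. by rewrite /adj -trmx_mul (map_mxM Num.conj). Qed.

Lemma unitary_unitmx (R : realType) r (U : 'M[R[i]]_r) :
  unitary U -> U \in unitmx.
Proof. by case/mulmx1_unit. Qed.

Section Kronecker.
Variables (R : realType) (r t : nat).
Implicit Types U : 'M[R[i]]_r.

Lemma kronI1 : kronI t (1%:M : 'M[R[i]]_r) = 1%:M.
Proof.
apply/matrixP => a b; rewrite !mxE eq_blk.
by case: (blk_q a == blk_q b); case: (blk_r a == blk_r b); rewrite ?mulr1 ?mulr0.
Qed.

Lemma kronIM U1 U2 : kronI t (U1 *m U2) = kronI t U1 *m kronI t U2.
Proof.
apply/matrixP => a b; rewrite !mxE big_blk mulr_suml; apply: eq_bigr => k _.
rewrite (bigD1 (blk_r a)) //= big1 => [|l /negbTE nl].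
  by rewrite !mxE !blk_q_idx !blk_r_idx eqxx addr0 mulr1 mulrA.
by rewrite !mxE !blk_q_idx !blk_r_idx eq_sym nl mulr0 mul0r.
Qed.

Lemma adj_kronI U : adj (kronI t U) = kronI t (adj U).
Proof. by apply/matrixP => a b; rewrite !mxE rmorphM rmorph_nat eq_sym. Qed.

End Kronecker.

Section Action.
Variables (R : realType) (r t s : nat).
Implicit Types (U : 'M[R[i]]_r) (V : 'M[R[i]]_(r * t, s)).

Lemma act1 V : act 1%:M V = V.
Proof. by rewrite /act kronI1 mul1mx. Qed.

Lemma actM U1 U2 V : act (U1 *m U2) V = act U1 (act U2 V).
Proof. by rewrite /act kronIM mulmxA. Qed.

Lemma block_act U V i : block (act U V) i = \sum_(k < r) U i k *: block V k.
Proof.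
apply/matrixP => j c; rewrite !mxE summxE big_blk; apply: eq_bigr => k _.
rewrite (bigD1 j) //= big1 => [|l /negbTE nl].
  by rewrite !mxE !blk_q_idx !blk_r_idx eqxx addr0 mulr1.
by rewrite !mxE !blk_q_idx !blk_r_idx eq_sym nl mulr0 mul0r.
Qed.

Lemma gram_act U V : unitary U -> adj (act U V) *m act U V = adj V *m V.
Proof.
move=> hU; rewrite /act adj_mul adj_kronI -mulmxA (mulmxA (kronI t (adj U))).
by rewrite -kronIM hU kronI1 mul1mx.
Qed.

Lemma blocks_lin_indep_act U V :
  U \in unitmx -> blocks_lin_indep V -> blocks_lin_indep (act U V).
Proof.
move=> Uunit hI c hc.
have cU0 : forall k, \sum_(i < r) c i * U i k = 0.
  apply: hI; rewrite -{}[RHS]hc; apply/esym.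
  under eq_bigr do rewrite block_act scaler_sumr.
  rewrite exchange_big /=; apply: eq_bigr => k _.
  by rewrite scaler_suml; apply: eq_bigr => i _; rewrite scalerA.
have : \row_i c i *m U = 0.
  by apply/rowP => k; rewrite !mxE -[RHS](cU0 k); apply: eq_bigr => i _; rewrite mxE.
move/(congr1 (mulmx^~ (invmx U))); rewrite mulmxK // mul0mx => /rowP c0 i.
by have := c0 i; rewrite !mxE.
Qed.

Lemma Vstr_act U V : unitary U -> Vstr V -> Vstr (act U V).
Proof.
move=> hU [hV hI]; split; first by rewrite gram_act.
exact: blocks_lin_indep_act (unitary_unitmx hU) hI.
Qed.

Lemma act_free U V : blocks_lin_indep V -> act U V = V -> U = 1%:M.
Proof.
move=> hI hUV; apply/matrixP => i k; apply/eqP; rewrite -subr_eq0; apply/eqP.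
apply: (hI (fun k => U i k - 1%:M i k)).
under eq_bigr do rewrite scalerBl.
by rewrite sumrB -!block_act hUV act1 subrr.
Qed.

End Action.

Section PolynomialMaps.
Variable R : realType.

(* [polymap d f]: [f] is a polynomial map of degree at most [d], i.e. its
   iterated directional derivatives of order [d] exist and are constant. *)
Fixpoint polymap (E F : normedModType R) (d : nat) (f : E -> F) : Prop :=
  match d with
  | 0 => exists c, f = cst c
  | d'.+1 => (forall x, differentiable f x) /\
             forall v, polymap d' (fun x => 'D_v f x)
  end.

Lemma eq_polymap (E F : normedModType R) d (f g : E -> F) :
  (forall x, f x = g x) -> polymap d g -> polymap d f.
Proof. by move=> /funext ->. Qed.

Lemma polymap_cst (E F : normedModType R) d (c : F) : polymap d (cst c : E -> F).
Proof.
elim: d c => [|d IH] c /=; first by exists c.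
split=> [x|v]; first exact: differentiable_cst.
by apply: (eq_polymap (g := cst 0)) => // x; exact: derive_cst.
Qed.

Lemma polymap_differentiable (E F : normedModType R) d (f : E -> F) :
  polymap d f -> forall x, differentiable f x.
Proof. by case: d => [[c ->] x|d []] //; exact: differentiable_cst. Qed.

Lemma polymap_continuous (E F : normedModType R) d (f : E -> F) :
  polymap d f -> continuous f.
Proof.
by move=> H x; apply: differentiable_continuous; exact: polymap_differentiable H x.
Qed.

Lemma polymapS (E F : normedModType R) d (f : E -> F) :
  polymap d f -> polymap d.+1 f.
Proof.
elim: d f => [|d IH] f; first by move=> [c ->]; exact: polymap_cst.
by move=> /= [df Df]; split => // v; apply: IH.
Qed.

Lemma polymap_le (E F : normedModType R) d e (f : E -> F) :
  (d <= e)%N -> polymap d f -> polymap e f.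
Proof.
move=> /subnK <- Hf; elim: (e - d)%N => [|k IH] //.
by rewrite addSn; exact: polymapS.
Qed.

Lemma polymap_smooth (E F : normedModType R) d (f : E -> F) :
  polymap d f -> smooth_on setT f.
Proof.
move=> Hf k; elim: k d f Hf => [|k IH] d f Hf /=.
  by move=> x _; exact: polymap_differentiable Hf x.
split=> [x _|v]; first exact: polymap_differentiable Hf x.
by have [_ /(_ v)] := polymapS Hf; apply: IH.
Qed.

Lemma polymapD (E F : normedModType R) d (f g : E -> F) :
  polymap d f -> polymap d g -> polymap d (fun x => f x + g x).
Proof.
elim: d f g => [|d IH] f g /=; first by move=> [a ->] [b ->]; exists (a + b).
move=> [df Df] [dg Dg]; split=> [x|v]; first exact: differentiableD.
apply: (eq_polymap (g := fun x => 'D_v f x + 'D_v g x)); last exact: IH.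
by move=> x; rewrite (deriveD (f := f)) //; apply: diff_derivable.
Qed.

Lemma polymapN (E F : normedModType R) d (f : E -> F) :
  polymap d f -> polymap d (fun x => - f x).
Proof.
elim: d f => [|d IH] f /=; first by move=> [a ->]; exists (- a).
move=> [df Df]; split=> [x|v]; first exact: differentiableN.
apply: (eq_polymap (g := fun x => - 'D_v f x)); last exact: IH.
by move=> x; rewrite (deriveN (f := f)) //; apply: diff_derivable.
Qed.

Lemma polymap_sum (E F : normedModType R) d n (f : 'I_n -> E -> F) :
  (forall i, polymap d (f i)) -> polymap d (fun x => \sum_(i < n) f i x).
Proof.
elim: n f => [|n IH] f H.
  by apply: (eq_polymap (g := cst 0)) => [x|]; [rewrite big_ord0|exact: polymap_cst].
apply: (eq_polymap (g := fun x => \sum_(i < n) f (widen_ord (leqnSn n) i) x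
                                  + f ord_max x)) => [x|].
  by rewrite big_ord_recr.
by apply: polymapD => //; apply: IH.
Qed.

Lemma polymapZl (E F : normedModType R) d (k : E -> R) (w : F) :
  polymap d k -> polymap d (fun x => k x *: w).
Proof.
elim: d k => [|d IH] k /=; first by move=> [a ->]; exists (a *: w).
move=> [dk Dk]; split=> [x|v]; first exact: differentiableZl.
apply: (eq_polymap (g := fun x => 'D_v k x *: w)); last exact: IH.
move=> x; rewrite deriveE; last exact: differentiableZl.
by rewrite diffZl // deriveE.
Qed.

Lemma polymapZ (E F : normedModType R) d (c : R) (f : E -> F) :
  polymap d f -> polymap d (fun x => c *: f x).
Proof.
elim: d f => [|d IH] f /=; first by move=> [a ->]; exists (c *: a).
move=> [df Df]; split=> [x|v]; first exact: differentiableZ.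
apply: (eq_polymap (g := fun x => c *: 'D_v f x)); last exact: IH.
by move=> x; rewrite (deriveZ (f := f)) //; apply: diff_derivable.
Qed.

Lemma polymapM (E : normedModType R) n d e (f g : E -> R) :
  (d + e <= n)%N -> polymap d f -> polymap e g -> polymap n (fun x => f x * g x).
Proof.
elim: n d e f g => [|n IH] d e f g.
  rewrite leqn0 addn_eq0 => /andP[/eqP -> /eqP ->] [a ->] [b ->].
  by exists (a * b).
case: d => [|d] hde.
  move=> [a ->] Hg; apply: (polymap_le hde).
  by apply: (eq_polymap (g := fun x => a *: g x)) => [x|]; [|exact: polymapZ].
case: e hde => [|e] hde.
  move=> Hf [b ->]; rewrite addn0 in hde; apply: (polymap_le hde).
  by apply: (eq_polymap (g := fun x => b *: f x)) => [x|]; [exact: mulrC|exact: polymapZ].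
move=> /= [df Df] [dg Dg]; split=> [x|v]; first exact: differentiableM.
apply: (eq_polymap (g := fun x => f x * 'D_v g x + g x * 'D_v f x)).
  by move=> x; rewrite (deriveM (f := f)) //; apply: diff_derivable.
apply: polymapD; first by apply: (IH d.+1 e) => //; rewrite addnS ltnS in hde.
by apply: (IH e.+1 d) => //; rewrite addnC addnS ltnS in hde.
Qed.

Lemma polymap_pair (E F1 F2 : normedModType R) d (f : E -> F1) (g : E -> F2) :
  polymap d f -> polymap d g -> polymap d (fun x => (f x, g x)).
Proof.
elim: d f g => [|d IH] f g /=; first by move=> [a ->] [b ->]; exists (a, b).
move=> [df Df] [dg Dg]; split=> [x|v]; first exact: differentiable_pair.
apply: (eq_polymap (g := fun x => ('D_v f x, 'D_v g x))); last exact: IH.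
move=> x; rewrite deriveE; last exact: differentiable_pair.
by rewrite diff_pair // !deriveE.
Qed.

Section LinearMaps.
Variables (E F : normedModType R) (L : E -> F).
Hypotheses (L_linear : linear L) (L_continuous : continuous L).

Let LL : {linear E -> F} := HB.pack L (GRing.isLinear.Build _ _ _ _ _ L_linear).

Let L_differentiable x : differentiable L x.
Proof. exact: (@linear_differentiable _ _ _ LL). Qed.

Let diff_L x : 'd L x = L :> (E -> F).
Proof. exact: (@diff_lin _ _ _ LL). Qed.

Lemma polymap_linear : polymap 1 L.
Proof. by split=> // v; exists (L v); apply/funext => x; rewrite deriveE // diff_L. Qed.

Lemma polymap_comp_linear (G : normedModType R) d (f : F -> G) :
  polymap d f -> polymap d (fun x => f (L x)).
Proof.
elim: d f => [|d IH] f /=; first by move=> [c ->]; exists c.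
move=> [df Df]; have dfL x : differentiable (fun x => f (L x)) x.
  exact: differentiable_comp (L_differentiable x) (df (L x)).
split=> // v; apply: (eq_polymap (g := fun x => 'D_(L v) f (L x))).
  by move=> x; rewrite !deriveE // (diff_comp (f := L)) //= diff_L.
exact: IH _ (Df (L v)).
Qed.

End LinearMaps.

Lemma polymap_coord m n (i : 'I_m) (j : 'I_n) :
  polymap 1 (fun M : 'M[R]_(m, n) => M i j).
Proof.
by apply: polymap_linear; [move=> a x y; rewrite !mxE | exact: coord_continuous].
Qed.

Lemma polymap_fst (A B F : normedModType R) d (f : A -> F) :
  polymap d f -> polymap d (fun p : A * B => f p.1).
Proof. by apply: polymap_comp_linear => // p; exact: cvg_fst. Qed.

Lemma polymap_snd (A B F : normedModType R) d (f : B -> F) :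
  polymap d f -> polymap d (fun p : A * B => f p.2).
Proof. by apply: polymap_comp_linear => // p; exact: cvg_snd. Qed.

Lemma polymap_mx (E : normedModType R) d m n (h : E -> 'I_m -> 'I_n -> R) :
  (forall i j, polymap d (fun x => h x i j)) ->
  polymap d (fun x => \matrix_(i, j) h x i j).
Proof.
move=> H; apply: (eq_polymap
  (g := fun x => \sum_(i < m) \sum_(j < n) h x i j *: delta_mx i j)) => [x|].
  rewrite [LHS]matrix_sum_delta.
  by apply: eq_bigr => i _; apply: eq_bigr => j _; rewrite mxE.
by apply: polymap_sum => i; apply: polymap_sum => j; exact: polymapZl.
Qed.

Lemma vec_mx_continuous m n : continuous (@vec_mx R m n).
Proof.
apply: (@polymap_continuous _ _ 1).
apply: (eq_polymap
  (g := fun v : 'rV[R]_(m * n) => \matrix_(i, j) v 0 (mxvec_index i j))) => [v|].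
  by apply/matrixP => i j; rewrite !mxE.
by apply: polymap_mx => i j; exact: polymap_coord.
Qed.

End PolynomialMaps.

Section ComplexCoordinates.
Variable R : realType.
Local Notation C := R[i].

Lemma ReM (x y : C) :
  complex.Re (x * y) = complex.Re x * complex.Re y - complex.Im x * complex.Im y.
Proof. by case: x y => a b [c d]. Qed.

Lemma ImM (x y : C) :
  complex.Im (x * y) = complex.Re x * complex.Im y + complex.Im x * complex.Re y.
Proof. by case: x y => a b [c d]. Qed.

Lemma Re_conj_mul (z : C) :
  complex.Re (Num.conj z * z) = complex.Re z ^+ 2 + complex.Im z ^+ 2.
Proof. by case: z => a b /=; ring. Qed.

Definition cpolymap (E : normedModType R) d (h : E -> C) :=
  polymap d (fun x => complex.Re (h x)) /\ polymap d (fun x => complex.Im (h x)).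

Lemma cpolymap_cst (E : normedModType R) d (c : C) : cpolymap d (fun _ : E => c).
Proof. by split; apply: polymap_cst. Qed.

Lemma cpolymap_sum (E : normedModType R) d n (f : 'I_n -> E -> C) :
  (forall i, cpolymap d (f i)) -> cpolymap d (fun x => \sum_(i < n) f i x).
Proof.
move=> H; split.
  apply: (eq_polymap (g := fun x => \sum_(i < n) complex.Re (f i x))) => [x|].
    exact: (raddf_sum (@complex.Re R : Rcomplex R -> R)).
  by apply: polymap_sum => i; case: (H i).
apply: (eq_polymap (g := fun x => \sum_(i < n) complex.Im (f i x))) => [x|].
  exact: (raddf_sum (@complex.Im R : Rcomplex R -> R)).
by apply: polymap_sum => i; case: (H i).
Qed.

Lemma cpolymapM (E : normedModType R) n d e (f g : E -> C) :
  (d + e <= n)%N -> cpolymap d f -> cpolymap e g -> cpolymap n (fun x => f x * g x).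
Proof.
move=> hde [f1 f2] [g1 g2]; split.
  apply: (eq_polymap (g := fun x => complex.Re (f x) * complex.Re (g x)
                         + - (complex.Im (f x) * complex.Im (g x)))) => [x|].
    exact: ReM.
  by apply: polymapD; [|apply: polymapN]; apply: polymapM hde _ _.
apply: (eq_polymap (g := fun x => complex.Re (f x) * complex.Im (g x)
                       + complex.Im (f x) * complex.Re (g x))) => [x|].
  exact: ImM.
by apply: polymapD; apply: polymapM hde _ _.
Qed.

Lemma cpolymap_conj (E : normedModType R) d (f : E -> C) :
  cpolymap d f -> cpolymap d (fun x => Num.conj (f x)).
Proof.
move=> [f1 f2]; split.
  by apply: (eq_polymap (g := fun x => complex.Re (f x))) => // x; case: (f x).
apply: (eq_polymap (g := fun x => - complex.Im (f x))) => [x|].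
  by case: (f x).
exact: polymapN.
Qed.

Lemma cpolymap_comp_linear (E F : normedModType R) d (L : E -> F) (f : F -> C) :
  linear L -> continuous L -> cpolymap d f -> cpolymap d (fun x => f (L x)).
Proof.
move=> lL cL [f1 f2].
by split; [exact: (polymap_comp_linear lL cL f1)|exact: (polymap_comp_linear lL cL f2)].
Qed.

Definition cmx m n (x : 'M[R]_(m, n) * 'M[R]_(m, n)) : 'M[C]_(m, n) :=
  \matrix_(i, j) Complex (x.1 i j) (x.2 i j).

Lemma rmxK m n (A : 'M[C]_(m, n)) : cmx (rmx A) = A.
Proof. by apply/matrixP => i j; rewrite !mxE; case: (A i j). Qed.

Lemma cmxK m n (x : 'M[R]_(m, n) * 'M[R]_(m, n)) : rmx (cmx x) = x.
Proof. by case: x => a b; congr (_, _); apply/matrixP => i j; rewrite !mxE. Qed.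

Lemma rmx_inj m n : injective (@rmx R m n).
Proof. by move=> A B hAB; rewrite -(rmxK A) hAB rmxK. Qed.

Lemma cpolymap_cmx m n (i : 'I_m) (j : 'I_n) :
  cpolymap 1 (fun x : 'M[R]_(m, n) * 'M[R]_(m, n) => cmx x i j).
Proof.
split; apply: (eq_polymap (g := fun x => _)) => [x|]; rewrite ?mxE //.
- exact: polymap_fst (polymap_coord R i j).
- exact: polymap_snd (polymap_coord R i j).
Qed.

Lemma polymap_rmx (E : normedModType R) d m n (H : E -> 'M[C]_(m, n)) :
  (forall i j, cpolymap d (fun x => H x i j)) -> polymap d (fun x => rmx (H x)).
Proof.
move=> HH; apply: (eq_polymap (g := fun x => (\matrix_(i, j) complex.Re (H x i j),
                                             \matrix_(i, j) complex.Im (H x i j)))).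
  by move=> x; congr (_, _); apply/matrixP => i j; rewrite !mxE.
by apply: polymap_pair; apply: polymap_mx => i j; case: (HH i j).
Qed.

End ComplexCoordinates.

Definition act_coords (R : realType) r t s
    (p : ('M[R]_r * 'M[R]_r) * ('M[R]_(r * t, s) * 'M[R]_(r * t, s))) :=
  rmx (act (cmx p.1) (cmx p.2)).

Lemma polymap_act_coords (R : realType) r t s : polymap 2 (@act_coords R r t s).
Proof.
apply: polymap_rmx => a c.
have -> : (fun p : ('M[R]_r * 'M[R]_r) * ('M[R]_(r * t, s) * 'M[R]_(r * t, s)) =>
            act (cmx p.1) (cmx p.2) a c) =
          (fun p => \sum_b (cmx p.1 (blk_q a) (blk_q b) * (blk_r a == blk_r b)%:R)
                           * cmx p.2 b c).
  by apply/funext => p; rewrite !mxE; apply: eq_bigr => b _; rewrite mxE.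
apply: cpolymap_sum => b; apply: (cpolymapM (d := 1) (e := 1)) => //.
  apply: (cpolymapM (d := 1) (e := 0)) => //; last exact: cpolymap_cst.
  by apply: cpolymap_comp_linear (cpolymap_cmx _ _ _) => // p; exact: cvg_fst.
by apply: cpolymap_comp_linear (cpolymap_cmx _ _ _) => // p; exact: cvg_snd.
Qed.

Section UnitaryGroup.
Variables (R : realType) (r : nat).

Definition unitary_coords := [set x : 'M[R]_r * 'M[R]_r | unitary (cmx x)].

Lemma closed_unitary_coords : closed unitary_coords.
Proof.
pose gram (x : 'M[R]_r * 'M[R]_r) := rmx (adj (cmx x) *m cmx x).
have gram_poly : polymap 2 gram.
  apply: polymap_rmx => i j.
  have -> : (fun x : 'M[R]_r * 'M[R]_r => (adj (cmx x) *m cmx x) i j) =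
            (fun x => \sum_k Num.conj (cmx x k i) * cmx x k j).
    by apply/funext => x; rewrite !mxE; apply: eq_bigr => k _; rewrite !mxE.
  apply: cpolymap_sum => k; apply: (cpolymapM (d := 1) (e := 1)) => //.
  - exact/cpolymap_conj/cpolymap_cmx.
  - exact: cpolymap_cmx.
have -> : unitary_coords = gram @^-1` [set rmx 1%:M].
  by apply/seteqP; split => x /=; [rewrite /gram => -> | move/rmx_inj].
apply: preimage_closed => [x _|]; first exact: polymap_continuous gram_poly x.
by apply: compact_closed; [exact: norm_hausdorff|exact: compact_set1].
Qed.

Lemma unitary_entry_bound (U : 'M[R[i]]_r) i j : unitary U ->
  `|complex.Re (U i j)| <= 1 /\ `|complex.Im (U i j)| <= 1.
Proof.
move=> hU; have := congr1 (fun M : 'M[R[i]]_r => complex.Re (M j j)) hU.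
rewrite /= !mxE eqxx /= (raddf_sum (@complex.Re R : Rcomplex R -> R)).
under eq_bigr do rewrite !mxE /= Re_conj_mul.
rewrite (bigD1 i) //= => col_norm.
have rest_ge0 : 0 <= \sum_(k < r | k != i)
    (complex.Re (U k j) ^+ 2 + complex.Im (U k j) ^+ 2).
  by apply: sumr_ge0 => k _; rewrite addr_ge0 // sqr_ge0.
have : complex.Re (U i j) ^+ 2 + complex.Im (U i j) ^+ 2 <= 1.
  by rewrite -col_norm lerDl.
by rewrite !expr2 => hab; split; rewrite ler_norml; apply/andP; split; nra.
Qed.

Lemma compact_mx_box m n (M : R) :
  compact [set A : 'M[R]_(m, n) | forall i j, `|A i j| <= M].
Proof.
have -> : [set A : 'M[R]_(m, n) | forall i j, `|A i j| <= M] =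
          vec_mx @` [set v : 'rV[R]_(m * n) | forall k, `[- M, M]%classic (v ord0 k)].
  apply/seteqP; split => [A hA|_ [v hv <-] i j].
    exists (mxvec A); last exact: mxvecK.
    by move=> k; case/mxvec_indexP: k => i j; rewrite /= mxvecE in_itv /= -ler_norml.
  by have := hv (mxvec_index i j); rewrite /= /vec_mx mxE in_itv /= -ler_norml.
apply: continuous_compact; first exact/continuous_subspaceT/vec_mx_continuous.
by apply: (@rV_compact _ _ (fun=> `[- M, M]%classic)) => _; exact: segment_compact.
Qed.

Lemma compact_unitary_coords : compact unitary_coords.
Proof.
pose box := [set A : 'M[R]_r | forall i j, `|A i j| <= 1].
have box_compact : compact (box `*` box) by apply: compact_setX; apply: compact_mx_box.
apply: (subclosed_compact closed_unitary_coords box_compact).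
move=> x ux; split=> i j /=; have [+ +] := unitary_entry_bound i j ux;
  by rewrite !mxE => hRe hIm.
Qed.

End UnitaryGroup.

Lemma act_proper (R : realType) r t s
    (K : set ('M[R[i]]_(r * t, s) * 'M[R[i]]_(r * t, s))%type) :
  (forall p, K p -> Vstr p.1 /\ Vstr p.2) ->
  compact [set (rmx p.1, rmx p.2) | p in K] ->
  compact [set (rmx q.1, rmx q.2) |
           q in [set q : ('M[R[i]]_r * 'M[R[i]]_(r * t, s))%type |
                 unitary q.1 /\ Vstr q.2 /\ K (act q.1 q.2, q.2)]].
Proof.
set K' := [set (rmx p.1, rmx p.2) | p in K] => KV cK'.
set f := fun y => (@act_coords R r t s y, y.2).
have f_cont : continuous f.
  apply: (@polymap_continuous _ _ _ 2); apply: polymap_pair.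
    exact: polymap_act_coords.
  apply: (polymap_le (d := 1)) => //; apply: (@polymap_snd _ _ _ _ _ id).
  by apply: polymap_linear => // x; exact: cvg_id.
set Q := [set (rmx q.1, rmx q.2) | q in _].
have -> : Q = @unitary_coords R r `*` (snd @` K') `&` f @^-1` K'.
  apply/seteqP; split => [_ [q [hU [hV hK]] <-]|[y1 y2] [[hU _] [p hp hpf]]].
    have fq : f (rmx q.1, rmx q.2) = (rmx (act q.1 q.2), rmx q.2).
      by rewrite /f /act_coords /= !rmxK.
    split; last by exists (act q.1 q.2, q.2) => //; rewrite fq.
    split; first by rewrite /unitary_coords /= rmxK.
    by exists (rmx (act q.1 q.2), rmx q.2) => //; exists (act q.1 q.2, q.2).
  have e1 : p.1 = act (cmx y1) (cmx y2) by apply: rmx_inj; exact: (congr1 fst hpf).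
  have e2 : p.2 = cmx y2 by apply: rmx_inj; rewrite cmxK; exact: (congr1 snd hpf).
  exists (cmx y1, cmx y2); last by rewrite /= !cmxK.
  split => //=; split; first by rewrite -e2; case: (KV p hp).
  by rewrite -e1 -e2 -surjective_pairing.
apply: compact_closedI.
  apply: compact_setX; first exact: compact_unitary_coords.
  by apply: continuous_compact => //; apply: continuous_subspaceT => y; exact: cvg_snd.
apply: preimage_closed => [y _|]; first exact: f_cont.
by apply: compact_closed => //; exact: norm_hausdorff.
Qed.

Unset Implicit Arguments.

Theorem proposition6 (R : realType) (s t r : nat)
    (hs : (s <= r * t)%N) (hr : (r <= s * t)%N) :
  (* the action is well defined: U . V lies in V_{s,t,r} *)
  (forall (U : 'M[R[i]]_r) (V : 'M[R[i]]_(r * t, s)),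
      unitary U -> Vstr V -> Vstr (act U V)) /\
  (* it is a (left) group action *)
  (forall V : 'M[R[i]]_(r * t, s), Vstr V -> act 1%:M V = V) /\
  (forall (U1 U2 : 'M[R[i]]_r) (V : 'M[R[i]]_(r * t, s)),
      unitary U1 -> unitary U2 -> Vstr V ->
      act (U1 *m U2) V = act U1 (act U2 V)) /\
  (* smooth: the action map U(r) x V_{s,t,r} -> V_{s,t,r} is locally the
     restriction of a C^oo map of the ambient (real) Euclidean spaces *)
  (forall (U0 : 'M[R[i]]_r) (V0 : 'M[R[i]]_(r * t, s)),
      unitary U0 -> Vstr V0 ->
      exists (W : set (('M[R]_r * 'M[R]_r) *
                       ('M[R]_(r * t, s) * 'M[R]_(r * t, s)))%type)
             (G : (('M[R]_r * 'M[R]_r) *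
                   ('M[R]_(r * t, s) * 'M[R]_(r * t, s)))%type ->
                  ('M[R]_(r * t, s) * 'M[R]_(r * t, s))%type),
        open W /\ W (rmx U0, rmx V0) /\ smooth_on W G /\
        forall (U : 'M[R[i]]_r) (V : 'M[R[i]]_(r * t, s)),
          unitary U -> Vstr V -> W (rmx U, rmx V) ->
          G (rmx U, rmx V) = rmx (act U V)) /\
  (* free *)
  (forall (U : 'M[R[i]]_r) (V : 'M[R[i]]_(r * t, s)),
      unitary U -> Vstr V -> act U V = V -> U = 1%:M) /\
  (* proper: preimages of compact subsets of V_{s,t,r} x V_{s,t,r} under
     (U, V) |-> (U . V, V) are compact in U(r) x V_{s,t,r} *)
  (forall K : set ('M[R[i]]_(r * t, s) * 'M[R[i]]_(r * t, s))%type,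
      (forall p, K p -> Vstr p.1 /\ Vstr p.2) ->
      compact [set (rmx p.1, rmx p.2) | p in K] ->
      compact [set (rmx q.1, rmx q.2) |
               q in [set q : ('M[R[i]]_r * 'M[R[i]]_(r * t, s))%type |
                     unitary q.1 /\ Vstr q.2 /\ K (act q.1 q.2, q.2)]]).
Proof.
(* [hs] and [hr] only make V_{s,t,r} nonempty; none of the properties needs them. *)
split; first exact: Vstr_act.
split; first by move=> V _; exact: act1.
split; first by move=> U1 U2 V _ _ _; exact: actM.
split.
  move=> U0 V0 _ _; exists setT, (@act_coords R r t s).
  split; first exact: openT.
  split=> //; split; first exact: polymap_smooth (polymap_act_coords R r t s).
  by move=> U V _ _ _; rewrite /act_coords /= !rmxK.
split; first by move=> U V _ [_ hI]; exact: act_free.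
exact: act_proper.
Qed.
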